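(* Let $\varphi$ be an $\mathrm{LTL_{PSL}}$ formula, $D=(I^+,I^-)$ a partition of the set $I$ of its subformulae of the form $s\preceq s'$, and $\varphi_D$ the associated formula. If $\varphi_D$ is $\mathrm{SLTL}$-satisfiable, then the language of the generalised Büchi automaton $\mathcal{A}_{\varphi_D}$ is non-empty.
   Context: Propositional variables $\mathcal{P}$ and standpoint symbols $\mathcal{S}$ (with universal symbol $*$) are countably infinite. SLTL formulae: $\varphi ::= p \mid s \preceq s' \mid \neg\varphi \mid \varphi\wedge\varphi \mid \Diamond_s\varphi \mid \Box_s\varphi \mid X\varphi \mid \varphi\,U\,\varphi$. A model is $M=(\Pi,\lambda)$ with $\Pi\neq\emptyset$ a set of traces $\sigma:\mathbb{N}\to 2^{\mathcal{P}}$, $\lambda:\mathcal{S}\to 2^{\Pi}\setminus\{\emptyset\}$, $\lambda( * )=\Pi$; $M,\sigma,i\models p$ iff $p\in\sigma(i)$; $s\preceq s'$ holds iff $\lambda(s)\subseteq\lambda(s')$; $\Diamond_s\psi$ (resp. $\Box_s\psi$) holds at $\sigma,i$ iff $\psi$ holds at $\sigma',i$ for some (resp. all) $\sigma'\in\lambda(s)$; $X\psi$ holds at $\sigma,i$ iff $\psi$ holds at $\sigma,i+1$; $\psi U\chi$ holds at $\sigma,i$ iff $\chi$ holds at some $\sigma,i'$, $i'\ge i$, and $\psi$ at $\sigma,i''$ for all $i\le i''<i'$. $G\psi:=\neg(\top U\neg\psi)$. Satisfiable: holds at $\sigma,0$ for some $M$, $\sigma\in\Pi$. $\mathrm{LTL_{PSL}}$: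 SLTL formulae with no $X$ or $U$ in the scope of any $\Diamond_s$ or $\Box_s$. $\varphi_D:=\varphi[I^+\mapsto\top,I^-\mapsto\bot]\wedge G\big(\bigwedge_{(s\preceq s')\in I^+}(s\preceq s')\wedge\bigwedge_{(s\preceq s')\in I^-}(\Diamond_s p_{s,s'}\wedge\neg\Diamond_{s'}p_{s,s'})\big)$, where members of $I^+$ (resp. $I^-$) are replaced by $\top$ (resp. $\bot$) and the $p_{s,s'}$ are fresh variables. PSL (propositional standpoint logic) is the temporal-free fragment; a PSL model is $(\Pi,V)$ with $\Pi$ finite nonempty, $V:\mathcal{S}\cup\mathcal{P}\to 2^{\Pi}$, $V(s)\neq\emptyset$ for all $s$, $V( * )=\Pi$; $\pi\models p$ iff $\pi\in V(p)$, $s\preceq s'$ iff $V(s)\subseteq V(s')$, $\Diamond_s\psi$/$\Box_s\psi$ iff $\psi$ holds at some/all $\pi'\in V(s)$. The closure $cl(\varphi_D)$ is the smallest set containing all subformulae of $\varphi_D$, $\top$ and $\bot$, closed under negation (identifying $\neg\neg\psi$ with $\psi$), and such that $\psi U\psi'\in cl(\varphi_D)$ implies $X(\psi U\psi')\in cl(\varphi_D)$. $B\subseteq cl(\varphi_D)$ is maximally consistent if $\top\in B$, $\bot\notin B$; $\psi\in B$ iff $\neg\psi\notin B$ for $\neg\psi\in cl(\varphi_D)$; $\psi_1\wedge\psi_2\in B$ iff $\psi_1,\psi_2\in B$; $\psi_1U\psi_2\in B$ iff $\psi_2\in B$ or $\{\psi_1,X(\psi_1U\psi_2)\}\subseteq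 B$. $B$ is standpoint-consistent if the conjunction of the members of $B$ that are PSL formulae is PSL-satisfiable; $B$ is s-elementary if maximally consistent and standpoint-consistent. $\mathcal{A}_{\varphi_D}=(Q,2^{\mathcal{P}(\varphi_D)},\delta,Q_0,\mathcal{F})$ where $\mathcal{P}(\varphi_D)$ is the set of variables of $\varphi_D$; $Q$ is the set of s-elementary sets; $Q_0=\{B\in Q:\varphi_D\in B\}$; $\mathcal{F}$ contains, for each $\psi_1U\psi_2\in cl(\varphi_D)$, the set $\{B\in Q:\psi_1U\psi_2\notin B\text{ or }\psi_2\in B\}$; $\delta(B,A)=\emptyset$ if $A\neq B\cap\mathcal{P}(\varphi_D)$, and otherwise $\delta(B,A)$ is the set of $B'\in Q$ such that for every $X\psi\in cl(\varphi_D)$, $X\psi\in B$ iff $\psi\in B'$. An infinite word is accepted if it has a run starting in $Q_0$ that visits each set of $\mathcal{F}$ infinitely often. *)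

From Stdlib Require List.
From mathcomp Require Import all_boot.
Set Implicit Arguments. Unset Strict Implicit. Unset Printing Implicit Defensive.

(* Propositional variables and standpoint symbols are both [nat]
   (countably infinite); standpoint symbol [0] is the universal standpoint [*]. *)
Definition univ_sp : nat := 0.

(* SLTL syntax.  [FTop] is the constant ⊤ (used by φ_D and by the closure);
   ⊥ is [FNeg FTop]. *)
Inductive form : Type :=
| FTop
| FVar (p : nat)
| FPrec (s s' : nat)
| FNeg (f : form)
| FAnd (f g : form)
| FDia (s : nat) (f : form)
| FBox (s : nat) (f : form)
| FNext (f : form)
| FUntil (f g : form).

Definition FBot : form := FNeg FTop.
Definition FG (f : form) : form := FNeg (FUntil FTop (FNeg f)).

(* φ is built from the grammar (no ⊤ constant) *)
Fixpoint no_top (f : form) : Prop :=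
  match f with
  | FTop => False
  | FVar _ | FPrec _ _ => True
  | FNeg g | FDia _ g | FBox _ g | FNext g => no_top g
  | FAnd g h | FUntil g h => no_top g /\ no_top h
  end.

Definition trace := nat -> nat -> bool.   (* σ i p  <->  p ∈ σ(i) *)

Record model := Model { Pi : trace -> Prop; lam : nat -> trace -> Prop }.

Definition wf_model (M : model) : Prop :=
  (exists σ, Pi M σ) /\
  (forall s, exists σ, lam M s σ) /\
  (forall s σ, lam M s σ -> Pi M σ) /\
  (forall σ, lam M univ_sp σ <-> Pi M σ).

Fixpoint sat (M : model) (σ : trace) (i : nat) (f : form) : Prop :=
  match f with
  | FTop => True
  | FVar p => σ i p = true
  | FPrec s s' => forall τ, lam M s τ -> lam M s' τ
  | FNeg g => ~ sat M σ i g
  | FAnd g h => sat M σ i g /\ sat M σ i h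
  | FDia s g => exists τ, lam M s τ /\ sat M τ i g
  | FBox s g => forall τ, lam M s τ -> sat M τ i g
  | FNext g => sat M σ i.+1 g
  | FUntil g h => exists j, i <= j /\ sat M σ j h /\
                    forall k, i <= k -> k < j -> sat M σ k g
  end.

Definition SLTL_satisfiable (f : form) : Prop :=
  exists M σ, wf_model M /\ Pi M σ /\ sat M σ 0 f.

Fixpoint temporal_free (f : form) : Prop :=
  match f with
  | FTop | FVar _ | FPrec _ _ => True
  | FNeg g | FDia _ g | FBox _ g => temporal_free g
  | FAnd g h => temporal_free g /\ temporal_free h
  | FNext _ | FUntil _ _ => False
  end.

Fixpoint ltl_psl (f : form) : Prop :=
  match f with
  | FTop | FVar _ | FPrec _ _ => True
  | FDia _ g | FBox _ g => temporal_free g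
  | FNeg g | FNext g => ltl_psl g
  | FAnd g h | FUntil g h => ltl_psl g /\ ltl_psl h
  end.

Fixpoint subforms (f : form) : list form :=
  f :: match f with
       | FTop | FVar _ | FPrec _ _ => [::]
       | FNeg g | FDia _ g | FBox _ g | FNext g => subforms g
       | FAnd g h | FUntil g h => subforms g ++ subforms h
       end.

Fixpoint vars (f : form) : list nat :=
  match f with
  | FTop | FPrec _ _ => [::]
  | FVar p => [:: p]
  | FNeg g | FDia _ g | FBox _ g | FNext g => vars g
  | FAnd g h | FUntil g h => vars g ++ vars h
  end.

Fixpoint prec_pairs (f : form) : list (nat * nat) :=
  match f with
  | FPrec s s' => [:: (s, s')]
  | FTop | FVar _ => [::]
  | FNeg g | FDia _ g | FBox _ g | FNext g => prec_pairs g
  | FAnd g h | FUntil g h => prec_pairs g ++ prec_pairs h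
  end.

Fixpoint bigAnd (l : list form) : form :=
  match l with
  | [::] => FTop
  | [:: x] => x
  | x :: l' => FAnd x (bigAnd l')
  end.

(* ---------- φ_D ----------
   The partition D = (I+, I-) of I is given by d : nat*nat -> bool:
   I+ = {(s,s') ∈ I | d (s,s')},  I- = {(s,s') ∈ I | ~~ d (s,s')}.
   fresh s s' is the fresh variable p_{s,s'}. *)
Fixpoint replD (d : nat * nat -> bool) (f : form) : form :=
  match f with
  | FPrec s s' => if d (s, s') then FTop else FBot
  | FTop => FTop
  | FVar p => FVar p
  | FNeg g => FNeg (replD d g)
  | FAnd g h => FAnd (replD d g) (replD d h)
  | FDia s g => FDia s (replD d g)
  | FBox s g => FBox s (replD d g)
  | FNext g => FNext (replD d g)
  | FUntil g h => FUntil (replD d g) (replD d h)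
  end.

Definition Iplus (d : nat * nat -> bool) (f : form) : list (nat * nat) :=
  filter d (prec_pairs f).
Definition Iminus (d : nat * nat -> bool) (f : form) : list (nat * nat) :=
  filter (fun st => ~~ d st) (prec_pairs f).

Definition phiD (f : form) (d : nat * nat -> bool) (fresh : nat -> nat -> nat) : form :=
  FAnd (replD d f)
    (FG (bigAnd
       (map (fun st => FPrec st.1 st.2) (Iplus d f) ++
        map (fun st => FAnd (FDia st.1 (FVar (fresh st.1 st.2)))
                            (FNeg (FDia st.2 (FVar (fresh st.1 st.2)))))
            (Iminus d f)))).

Definition fresh_ok (f : form) (d : nat * nat -> bool) (fresh : nat -> nat -> nat) : Prop :=
  forall st, List.In st (Iminus d f) ->
    ~ List.In (fresh st.1 st.2) (vars f) /\
    forall st', List.In st' (Iminus d f) ->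
      fresh st.1 st.2 = fresh st'.1 st'.2 -> st = st'.

Fixpoint nnorm (f : form) : form :=
  match f with
  | FTop => FTop
  | FVar p => FVar p
  | FPrec s s' => FPrec s s'
  | FNeg g => match nnorm g with FNeg h => h | g' => FNeg g' end
  | FAnd g h => FAnd (nnorm g) (nnorm h)
  | FDia s g => FDia s (nnorm g)
  | FBox s g => FBox s (nnorm g)
  | FNext g => FNext (nnorm g)
  | FUntil g h => FUntil (nnorm g) (nnorm h)
  end.

Definition negn (f : form) : form :=
  match f with FNeg g => g | _ => FNeg f end.

Definition cl_base (f g : form) : Prop :=
  List.In g (subforms f) \/ g = FTop \/ g = FBot \/
  exists a b, List.In (FUntil a b) (subforms f) /\ g = FNext (FUntil a b).

(* cl(f), formulae taken up to identification of ¬¬ψ with ψ *)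
Definition in_cl (f g : form) : Prop :=
  exists h, cl_base f h /\ (g = nnorm h \/ g = negn (nnorm h)).

Definition fset := form -> Prop.   (* subsets of cl(f) *)

Definition max_consistent (f : form) (B : fset) : Prop :=
  (forall g, B g -> in_cl f g) /\
  B FTop /\ ~ B FBot /\
  (forall g, in_cl f g -> (B g <-> ~ B (negn g))) /\
  (forall a b, in_cl f (FAnd a b) -> (B (FAnd a b) <-> B a /\ B b)) /\
  (forall a b, in_cl f (FUntil a b) ->
     (B (FUntil a b) <-> B b \/ (B a /\ B (FNext (FUntil a b))))).

(* PSL semantics on a finite set of points T, with V split into
   Vs (standpoints) and Vp (variables) *)
Fixpoint psl_sat (T : finType) (Vs : nat -> T -> Prop) (Vp : nat -> T -> Prop)
    (x : T) (f : form) : Prop :=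
  match f with
  | FTop => True
  | FVar p => Vp p x
  | FPrec s s' => forall y, Vs s y -> Vs s' y
  | FNeg g => ~ psl_sat Vs Vp x g
  | FAnd g h => psl_sat Vs Vp x g /\ psl_sat Vs Vp x h
  | FDia s g => exists y, Vs s y /\ psl_sat Vs Vp y g
  | FBox s g => forall y, Vs s y -> psl_sat Vs Vp y g
  | FNext _ | FUntil _ _ => False   (* not PSL formulae; never used *)
  end.

Definition psl_model (T : finType) (Vs : nat -> T -> Prop) : Prop :=
  (forall s, exists y, Vs s y) /\ (forall y, Vs univ_sp y).

Definition standpoint_consistent (B : fset) : Prop :=
  exists (T : finType) (Vs : nat -> T -> Prop) (Vp : nat -> T -> Prop) (x : T),
    psl_model Vs /\ forall g, B g -> temporal_free g -> psl_sat Vs Vp x g.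

Definition s_elementary (f : form) (B : fset) : Prop :=
  max_consistent f B /\ standpoint_consistent B.

Definition letter := nat -> bool.   (* A ⊆ P(f) *)

Definition aut_init (f : form) (B : fset) : Prop :=
  s_elementary f B /\ B (nnorm f).

Definition aut_delta (f : form) (B : fset) (A : letter) (B' : fset) : Prop :=
  (forall p, A p -> List.In p (vars f)) /\
  (forall p, List.In p (vars f) -> (A p <-> B (FVar p))) /\
  s_elementary f B' /\
  (forall g, in_cl f (FNext g) -> (B (FNext g) <-> B' g)).

Definition aut_accepts_run (f : form) (w : nat -> letter) (rho : nat -> fset) : Prop :=
  aut_init f (rho 0) /\
  (forall i, aut_delta f (rho i) (w i) (rho i.+1)) /\
  (forall a b, in_cl f (FUntil a b) ->
     forall n, exists m, n <= m /\ (~ rho m (FUntil a b) \/ rho m b)).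

Definition aut_lang_nonempty (f : form) : Prop :=
  exists (w : nat -> letter) (rho : nat -> fset),
    (forall i p, w i p -> List.In p (vars f)) /\ aut_accepts_run f w rho.

(** The run of [A_f] on [σ] visits at time [i] the set of closure formulas true at
    [(σ, i)]: maximal consistency and the transition and acceptance conditions are
    the semantics of [¬], [∧], [X] and the expansion law of [U].  For standpoint
    consistency, the temporal-free members of that set mention only finitely many
    [◇_s], [□_s] and [s ⪯ s'], so finitely many traces of [M] witness all of them;
    restricted to [σ] and these witnesses, [M] becomes a finite PSL model agreeing
    with [M] at time [i] on every temporal-free closure formula. *)

From mathcomp Require Import all_boot.
From Stdlib Require Import Classical.

Set Implicit Arguments.
Unset Strict Implicit.
Unset Printing Implicit Defensive.

Lemma subforms_refl g : List.In g (subforms g).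
Proof. by case: g => /=; left. Qed.

Lemma subforms_trans a b c :
  List.In b (subforms a) -> List.In c (subforms b) -> List.In c (subforms a).
Proof.
elim: a => [|p|s s'|a IH|a IHa a' IHa'|s a IH|s a IH|a IH|a IHa a' IHa'] /=
  [<- // | Hb] Hc; right => //;
  try by [exact: IH Hb Hc | case: Hb].
all: apply/List.in_app_iff; case/List.in_app_iff: Hb => Hb;
  [left; exact: IHa Hb Hc | right; exact: IHa' Hb Hc].
Qed.

Lemma nnorm_FNeg g : nnorm (FNeg g) = negn (nnorm g).
Proof. by rewrite /=; case: nnorm. Qed.

Lemma nnorm_neq_FNeg2 h y : nnorm h <> FNeg (FNeg y).
Proof.
elim: h y => //= h IH y.
case E: (nnorm h) => [||||||||f] //= Ef.
by move: E; rewrite Ef; apply: IH.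
Qed.

Lemma negnK_nnorm h : negn (negn (nnorm h)) = nnorm h.
Proof.
case E: (nnorm h) => [|||f|||||] //=.
by case: f E => // f /nnorm_neq_FNeg2.
Qed.

Lemma subforms_negn x c :
  List.In c (subforms (negn x)) -> negn x = c \/ List.In c (subforms x).
Proof. by case: x => /=; tauto. Qed.

Lemma subforms_nnorm h c :
  List.In c (subforms (nnorm h)) -> exists2 h', List.In h' (subforms h) & nnorm h' = c.
Proof.
elim: h c => [|p|s s'|h IH|h1 IH1 h2 IH2|s h IH|s h IH|h IH|h1 IH1 h2 IH2] c.
4: by rewrite nnorm_FNeg => /subforms_negn [<-|/IH [h' Hh' <-]];
     [exists (FNeg h); [left | rewrite nnorm_FNeg] | exists h'; [right|]].
all: move=> /= [<- | Hc]; first by eexists; [left|].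
all: try by case: Hc.
all: try by have [h' Hh' <-] := IH _ Hc; exists h'; [right|].
all: by case/List.in_app_iff: Hc => [/IH1|/IH2] [h' Hh' <-]; exists h' => //;
  right; apply/List.in_app_iff; [left|right].
Qed.

Lemma cl_base_subforms f h h' : cl_base f h -> List.In h' (subforms h) -> cl_base f h'.
Proof.
case=> [Hh|[->|[->|[a [b [Hab ->]]]]]] /=.
- by move=> Hh'; left; apply: subforms_trans Hh Hh'.
- by case=> // <-; right; left.
- by case=> [<-|[<-|[]]]; [right; right; left | right; left].
- case=> [<-|Hh']; first by right; right; right; exists a, b.
  by left; apply: subforms_trans Hab Hh'.
Qed.

Lemma in_cl_subforms f g c : in_cl f g -> List.In c (subforms g) -> in_cl f c.
Proof.
case=> h [Hh Hg] Hc.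
have [-> | Hsub] : c = negn (nnorm h) \/ List.In c (subforms (nnorm h)).
  by case: Hg Hc => ->; [right | case/subforms_negn; [left | right]].
- by exists h; split=> //; right.
- case/subforms_nnorm: Hsub => h' Hh' <-.
  by exists h'; split; [exact: cl_base_subforms Hh Hh' | left].
Qed.

Lemma nnorm_Until_inv h a b :
  nnorm h = FUntil a b \/ nnorm h = FNeg (FUntil a b) ->
  exists x y, List.In (FUntil x y) (subforms h) /\ nnorm x = a /\ nnorm y = b.
Proof.
elim: h => [|p|s s'|h IH|h1 _ h2 _|s h _|s h _|h _|h1 _ h2 _] /=; try by case.
- move=> H.
  suff [x [y [Hxy Hab]]] :
      exists x y, List.In (FUntil x y) (subforms h) /\ nnorm x = a /\ nnorm y = b.
    by exists x, y; split=> //; right.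
  apply: IH; move: H; case E: (nnorm h) => [|||f|||||g1 g2] [Hf|Hf] //.
  + by right; rewrite -Hf.
  + by move: E; rewrite Hf => /nnorm_neq_FNeg2.
  + by case: Hf => <- <-; left.
- by case=> // [[<- <-]]; exists h1, h2; split=> //; left.
Qed.

Lemma in_cl_next_until f a b : in_cl f (FUntil a b) -> in_cl f (FNext (FUntil a b)).
Proof.
case=> h [Hh Hg].
have /nnorm_Until_inv [x [y [Hxy [<- <-]]]] :
    nnorm h = FUntil a b \/ nnorm h = FNeg (FUntil a b).
  by case: Hg => Hg; [left | right; move: Hg; case: (nnorm h) => //= k <-].
case: (cl_base_subforms Hh Hxy) => [Hsub|[|[|[? [? [_]]]]]] //.
by exists (FNext (FUntil x y)); split; [right; right; right; exists x, y | left].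
Qed.

Lemma in_cl_negn f g : in_cl f g -> in_cl f (negn g).
Proof. by case=> h [Hh [->|->]]; exists h; split=> //; [right | left; apply: negnK_nnorm]. Qed.

Lemma in_cl_top f : in_cl f FTop.
Proof. by exists FTop; split; [right; left | left]. Qed.

Lemma in_cl_finite f : exists L, forall g, in_cl f g -> List.In g L.
Proof.
exists (List.flat_map (fun h => [:: nnorm h; negn (nnorm h)])
          (FTop :: FBot :: subforms f ++ map FNext (subforms f))).
move=> g [h [Hh Hg]]; apply/List.in_flat_map; exists h.
split; last by case: Hg => ->; [left | right; left].
case: Hh => [Hh|[->|[->|[a [b [Hab ->]]]]]].
- by right; right; apply/List.in_app_iff; left.
- by left.
- by right; left.
- by right; right; apply/List.in_app_iff; right; apply: List.in_map.
Qed.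

Lemma vars_subforms f p : List.In p (vars f) -> List.In (FVar p) (subforms f).
Proof.
elim: f => //= [q [->|[]]|g IH|g IHg h IHh|s g IH|s g IH|g IH|g IHg h IHh];
  try by [left | right; apply: IH].
all: by case/List.in_app_iff=> [/IHg|/IHh] Hp; right; apply/List.in_app_iff; [left|right].
Qed.

Lemma in_cl_operands f a b :
  in_cl f (FAnd a b) \/ in_cl f (FUntil a b) -> in_cl f a /\ in_cl f b.
Proof.
by case=> H; split; apply: (in_cl_subforms H); right; apply/List.in_app_iff;
  [left|right|left|right]; apply: subforms_refl.
Qed.

Lemma sat_negn M σ i g : sat M σ i (negn g) <-> ~ sat M σ i g.
Proof. by case: g => //= g; split=> [H Hn|/NNPP //]; apply: Hn H. Qed.

Lemma sat_nnorm M g σ i : sat M σ i (nnorm g) <-> sat M σ i g.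
Proof.
elim: g σ i => [|p|s s'|g IH|g IHg h IHh|s g IH|s g IH|g IH|g IHg h IHh] σ i //=.
- by rewrite -/(nnorm (FNeg g)) nnorm_FNeg sat_negn IH.
- by rewrite IHg IHh.
- by split=> -[τ [Hτ Hg]]; exists τ; split=> //; apply/IH.
- by split=> H τ /H /IH.
- split=> -[j [Hij [Hh Hg]]]; exists j; split=> //.
  all: by split=> [|k Hik Hkj]; [apply/IHh | apply/IHg; apply: Hg].
Qed.

Lemma sat_until M σ i a b :
  sat M σ i (FUntil a b) <-> sat M σ i b \/ sat M σ i a /\ sat M σ i (FNext (FUntil a b)).
Proof.
split=> /=.
- case=> j [+ [Hb Ha]]; rewrite leq_eqVlt => /orP [/eqP ->|Hij]; first by left.
  right; split; first exact: Ha.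
  by exists j; split=> //; split=> // k Hik; apply: Ha; apply: ltnW.
- case=> [Hb|[Ha [j [Hij [Hb Hk]]]]].
  + by exists i; split=> //; split=> // k Hik Hki; rewrite leqNgt Hki in Hik.
  + exists j; split; first exact: ltnW.
    split=> // k; rewrite leq_eqVlt => /orP [/eqP <- //|]; exact: Hk.
Qed.

Definition covered (A T : Type) (pt : T -> A) (P : A -> Prop) : Prop :=
  (exists a, P a) -> exists x, P (pt x).

Section FiniteSubmodel.

Variables (M : model) (i : nat).

(* A finite submodel that covers these predicates preserves the truth of the top
   connective of [g] at time [i]. *)
Definition demands (g : form) : seq (trace -> Prop) :=
  match g with
  | FPrec s s' => [:: lam M s; lam M s'; fun τ => lam M s τ /\ ~ lam M s' τ]
  | FDia s a => [:: lam M s; fun τ => lam M s τ /\ sat M τ i a]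
  | FBox s a => [:: lam M s; fun τ => lam M s τ /\ ~ sat M τ i a]
  | _ => [::]
  end.

Lemma demands_lam g P τ : List.In P (demands g) -> P τ -> exists s, lam M s τ.
Proof.
case: g => //= [s s'|s a|s a]; do ![case=> [<-|]]=> //.
all: by [exists s | exists s' | case=> H _; exists s].
Qed.

Hypothesis wfM : wf_model M.
Variables (T : finType) (pt : T -> trace).

(* A standpoint with no point in the submodel is interpreted as the whole carrier,
   which keeps every [V(s)] nonempty; such standpoints never occur in covered formulas. *)
Definition restr_sp s x := lam M s (pt x) \/ ~ exists y, lam M s (pt y).
Definition restr_var p x := pt x i p.

Lemma restr_sp_lam s : covered pt (lam M s) -> forall x, restr_sp s x <-> lam M s (pt x).
Proof.
have [_ [lam_nonempty _]] := wfM.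
move=> cov x; have [y Hy] := cov (lam_nonempty s).
by split=> [[//|[]]|]; [exists y | left].
Qed.

Lemma restr_psl_model (x0 : T) : (forall x, Pi M (pt x)) -> psl_model restr_sp.
Proof.
have [_ [_ [_ lam_univ]]] := wfM.
move=> HPi; split=> [s|x]; last by left; apply/lam_univ.
case: (classic (exists y, lam M s (pt y))) => [[y Hy]|Hn]; first by exists y; left.
by exists x0; right.
Qed.

Lemma psl_sat_restr g :
  temporal_free g ->
  (forall c, List.In c (subforms g) -> forall P, List.In P (demands c) -> covered pt P) ->
  forall x, psl_sat restr_sp restr_var x g <-> sat M (pt x) i g.
Proof.
elim: g => [|p|s s'|g IH|g IHg h IHh|s g IH|s g IH|g _|g _ h _] //= Htf Hcov x.
- have cov := Hcov _ (or_introl erefl).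
  have Es := restr_sp_lam (cov _ (or_introl erefl)).
  have Es' := restr_sp_lam (cov _ (or_intror (or_introl erefl))).
  split=> [H τ Hτ | H y /Es /H /Es' //].
  apply: NNPP => Hn.
  have [y [Hy Hny]] :=
    cov _ (or_intror (or_intror (or_introl erefl))) (ex_intro _ τ (conj Hτ Hn)).
  by apply/Hny/Es'/H/Es.
- have {}IH := IH Htf (fun c Hc => Hcov c (or_intror Hc)) x.
  by split=> Hn H; apply: Hn; apply/IH.
- case: Htf => Htg Hth.
  have {}IHg := IHg Htg (fun c Hc => Hcov c (or_intror (List.in_or_app _ _ _ (or_introl Hc)))) x.
  have {}IHh := IHh Hth (fun c Hc => Hcov c (or_intror (List.in_or_app _ _ _ (or_intror Hc)))) x.
  by rewrite IHg IHh.
- have cov := Hcov _ (or_introl erefl).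
  have Es := restr_sp_lam (cov _ (or_introl erefl)).
  have {}IH := IH Htf (fun c Hc => Hcov c (or_intror Hc)).
  split=> [[y [/Es Hy /IH Hg]]|Hex]; first by exists (pt y).
  have [y [Hy Hg]] := cov _ (or_intror (or_introl erefl)) Hex.
  by exists y; split; [apply/Es | apply/IH].
- have cov := Hcov _ (or_introl erefl).
  have Es := restr_sp_lam (cov _ (or_introl erefl)).
  have {}IH := IH Htf (fun c Hc => Hcov c (or_intror Hc)).
  split=> [H τ Hτ|H y /Es /H /IH //].
  apply: NNPP => Hn.
  have [y [Hy Hny]] := cov _ (or_intror (or_introl erefl)) (ex_intro _ τ (conj Hτ Hn)).
  by apply/Hny/IH/H/Es.
Qed.

End FiniteSubmodel.

Lemma finite_cover (A : Type) (Ps : seq (A -> Prop)) :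
  exists W : seq A, (forall a, List.In a W -> exists2 P, List.In P Ps & P a) /\
    forall P, List.In P Ps -> (exists a, P a) -> exists2 a, List.In a W & P a.
Proof.
elim: Ps => [|P Ps [W [HW HPs]]]; first by exists [::].
case: (classic (exists a, P a)) => [[a Ha]|HnP].
- exists (a :: W); split.
  + by move=> b [<-|/HW [Q HQ Hb]]; [exists P; [left|] | exists Q; [right|]].
  + by move=> Q [<- _|/HPs H /H [b Hb HQb]]; [exists a; [left|] | exists b; [right|]].
- exists W; split.
  + by move=> b /HW [Q HQ Hb]; exists Q; [right|].
  + by move=> Q [<- /HnP|/HPs].
Qed.

Lemma finite_covering_points (A : Type) (a0 : A) (Ps : seq (A -> Prop)) :
  exists n (pt : 'I_n.+1 -> A), pt ord0 = a0 /\
    (forall k, pt k = a0 \/ exists2 P, List.In P Ps & P (pt k)) /\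
    (forall P, List.In P Ps -> covered pt P).
Proof.
have [W [HW HPs]] := finite_cover Ps.
exists (size W), (fun k => List.nth k (a0 :: W) a0); split=> //; split.
- move=> k; case: (List.nth_in_or_default k (a0 :: W) a0) => [[<-|/HW]|->]; by [left | right].
- move=> P /HPs cov /cov [a /(List.In_nth _ _ a0) [n [Hn <-]] Ha].
  have Hn' : n.+1 < (size W).+1 by rewrite ltnS; apply/ltP.
  by exists (Ordinal Hn').
Qed.

Definition true_closure M σ i f : fset := fun g => in_cl f g /\ sat M σ i g.

Lemma true_closure_max_consistent M σ i f : max_consistent f (true_closure M σ i f).
Proof.
split; first by move=> g [].
split; first by split; [apply: in_cl_top|].
split; first by case=> _ /=; apply.
split.
  move=> g Hg; have Hng := in_cl_negn Hg; rewrite /true_closure sat_negn.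
  by split=> [[_ H] [_ Hn] // | H]; split=> //; apply: NNPP => Hn; apply: H.
split.
  move=> a b Hab; have [Ha Hb] := in_cl_operands (or_introl Hab).
  by rewrite /true_closure /=; tauto.
move=> a b Hab; have [Ha Hb] := in_cl_operands (or_intror Hab).
have := in_cl_next_until Hab; rewrite /true_closure sat_until; tauto.
Qed.

Lemma true_closure_standpoint_consistent M σ i f :
  wf_model M -> Pi M σ -> standpoint_consistent (true_closure M σ i f).
Proof.
move=> wfM Hσ; have [_ [_ [lam_Pi _]]] := wfM.
have [L HL] := in_cl_finite f.
have [n [pt [pt0 [Hpt Hcov]]]] := finite_covering_points σ (List.flat_map (demands M i) L).
have HPi k : Pi M (pt k).
  case: (Hpt k) => [->|[P /List.in_flat_map [g [_ HP]] /(demands_lam HP) [s]]] //.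
  exact: lam_Pi.
exists _, (restr_sp M pt), (restr_var i pt), ord0.
split; first exact: (restr_psl_model wfM ord0 HPi).
move=> g [Hg Hsat] Htf; rewrite -pt0 in Hsat; apply/psl_sat_restr => // c Hc P HP.
by apply: Hcov; apply/List.in_flat_map; exists c; split=> //; apply/HL/(in_cl_subforms Hg).
Qed.

Lemma true_closure_s_elementary M σ i f :
  wf_model M -> Pi M σ -> s_elementary f (true_closure M σ i f).
Proof.
by split; [apply: true_closure_max_consistent | apply: true_closure_standpoint_consistent].
Qed.

Lemma InP (T : eqType) (x : T) s : reflect (List.In x s) (x \in s).
Proof.
elim: s => [|y s IH]; first by constructor.
rewrite in_cons; apply: (iffP orP) => [[/eqP ->|/IH]|[->|/IH]]; by [left | right].
Qed.

Theorem satisfiable_aut_lang_nonempty f : SLTL_satisfiable f -> aut_lang_nonempty f.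
Proof.
case=> M [σ [wfM [Hσ Hf]]].
have Hsel i := true_closure_s_elementary i f wfM Hσ.
have w_vars i p : σ i p && (p \in vars f) -> List.In p (vars f) by case/andP=> _ /InP.
exists (fun i p => σ i p && (p \in vars f)), (fun i => true_closure M σ i f).
split; first exact: w_vars.
split.
  split; first exact: Hsel.
  by split; [exists f; split; [left; apply: subforms_refl | left] | apply/sat_nnorm].
split.
  move=> i; split; first exact: w_vars.
  split.
    move=> p Hp; have Hcl : in_cl f (FVar p).
      by exists (FVar p); split; [left; apply: vars_subforms | left].
    by have /InP -> := Hp; rewrite andbT /true_closure /=; tauto.
  split; first exact: Hsel.
  move=> g Hg; have Hcl : in_cl f g by apply: (in_cl_subforms Hg); right; apply: subforms_refl.
  by rewrite /true_closure /=; tauto.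
move=> a b Hab n.
case: (classic (sat M σ n (FUntil a b))) => [[j [Hnj [Hb _]]]|Hn].
  by exists j; split=> //; right; split=> //; apply: (in_cl_subforms Hab); right;
     apply/List.in_app_iff; right; apply: subforms_refl.
by exists n; split=> //; left; case.
Qed.

(* The shape of [φ_D] and the freshness of the [p_{s,s'}] only matter for the converse
   direction: every satisfiable formula has an accepting run. *)
Theorem lemma4 (phi : form) (d : nat * nat -> bool) (fresh : nat -> nat -> nat) :
  no_top phi ->
  ltl_psl phi ->
  fresh_ok phi d fresh ->
  SLTL_satisfiable (phiD phi d fresh) ->
  aut_lang_nonempty (phiD phi d fresh).
Proof. by move=> _ _ _; apply: satisfiable_aut_lang_nonempty. Qed.
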